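(* Let $E/\mathbb{Q}$ be given by the model $y^2=x^3+Ax+B$ ($A,B\in\mathbb{Z}$) described in the context and $X=\max\{|A|^3,|B|^2\}$. Let $0\le\delta\le1$. Let $P,Q\in E(\mathbb{Q})$ satisfy $X^{1/6}\le x(P)<x(Q)$ and $x(P)=x_1/s$, $x(Q)=x_2/s$ with $x_1,x_2\in\mathbb{Z}$, $s$ a positive integer, $\gcd(x_1,s)\le s^\delta$ and $\gcd(x_2,s)\le s^\delta$. Then $$h(P+Q)\le h(P)+2h(Q)+3\delta\,h(s)+2.9.$$
   Context: The model is obtained from a global minimal Weierstrass equation of $E$ by the substitution $x\mapsto \frac{1}{36}(x-3b_2)$, $y\mapsto \frac12(\frac{y}{108}-\frac{a_1}{36}(x-3b_2)-a_3)$. $h$ is the absolute logarithmic Weil height (so $h(s)=\log s$), and $h(P)=h(x(P))$. *)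

From HB Require Import structures.
From mathcomp Require Import all_boot all_order all_algebra.
From mathcomp Require Import all_classical all_reals all_analysis.
Set Implicit Arguments. Unset Strict Implicit. Unset Printing Implicit Defensive.
Import Order.TTheory GRing.Theory Num.Theory.
Local Open Scope ring_scope.

Section Weierstrass.
Variable K : comNzRingType.

Definition wb2 (a1 a2 a3 a4 a6 : K) : K := a1 ^+ 2 + 4%:R * a2.
Definition wb4 (a1 a2 a3 a4 a6 : K) : K := 2%:R * a4 + a1 * a3.
Definition wb6 (a1 a2 a3 a4 a6 : K) : K := a3 ^+ 2 + 4%:R * a6.
Definition wb8 (a1 a2 a3 a4 a6 : K) : K := a1 ^+ 2 * a6 + 4%:R * a2 * a6 - a1 * a3 * a4
                      + a2 * a3 ^+ 2 - a4 ^+ 2.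
Definition wc4 (a1 a2 a3 a4 a6 : K) : K :=
  let b2 := wb2 a1 a2 a3 a4 a6 in let b4 := wb4 a1 a2 a3 a4 a6 in
  b2 ^+ 2 - 24%:R * b4.
Definition wc6 (a1 a2 a3 a4 a6 : K) : K :=
  let b2 := wb2 a1 a2 a3 a4 a6 in let b4 := wb4 a1 a2 a3 a4 a6 in
  let b6 := wb6 a1 a2 a3 a4 a6 in
  - b2 ^+ 3 + 36%:R * b2 * b4 - 216%:R * b6.
Definition wdisc (a1 a2 a3 a4 a6 : K) : K :=
  let b2 := wb2 a1 a2 a3 a4 a6 in let b4 := wb4 a1 a2 a3 a4 a6 in
  let b6 := wb6 a1 a2 a3 a4 a6 in let b8 := wb8 a1 a2 a3 a4 a6 in
  - b2 ^+ 2 * b8 - 8%:R * b4 ^+ 3 - 27%:R * b6 ^+ 2 + 9%:R * b2 * b4 * b6.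
End Weierstrass.

(* Change of variables x = u^2 x' + r, y = u^3 y' + s u^2 x' + t
   (Silverman, Table 3.1): the new coefficients a_i'. *)
Definition ch_a1 (u r s t a1 : rat) : rat := (a1 + 2%:R * s) / u.
Definition ch_a2 (u r s t a1 a2 : rat) : rat := (a2 - s * a1 + 3%:R * r - s ^+ 2) / u ^+ 2.
Definition ch_a3 (u r s t a1 a3 : rat) : rat := (a3 + r * a1 + 2%:R * t) / u ^+ 3.
Definition ch_a4 (u r s t a1 a2 a3 a4 : rat) : rat := (a4 - s * a3 + 2%:R * r * a2 - (t + r * s) * a1
                           + 3%:R * r ^+ 2 - 2%:R * s * t) / u ^+ 4.
Definition ch_a6 (u r s t a1 a2 a3 a4 a6 : rat) : rat := (a6 + r * a4 + r ^+ 2 * a2 + r ^+ 3 - t * a3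
                           - t ^+ 2 - r * t * a1) / u ^+ 6.

Definition is_int_rat (q : rat) : bool := q \is a Num.int.

Definition global_minimal (a1 a2 a3 a4 a6 : int) : Prop :=
  wdisc a1 a2 a3 a4 a6 != 0 /\
  forall u r s t : rat, u != 0 ->
    let b1 := ch_a1 u r s t a1%:~R
    in let b2 := ch_a2 u r s t a1%:~R a2%:~R
    in let b3 := ch_a3 u r s t a1%:~R a3%:~R
    in let b4 := ch_a4 u r s t a1%:~R a2%:~R a3%:~R a4%:~R
    in let b6 := ch_a6 u r s t a1%:~R a2%:~R a3%:~R a4%:~R a6%:~R in
    [&& is_int_rat b1, is_int_rat b2, is_int_rat b3, is_int_rat b4
      & is_int_rat b6] ->
    `|(wdisc a1 a2 a3 a4 a6)%:~R : rat| <= `|wdisc b1 b2 b3 b4 b6|.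

Definition short_model_of_minimal (A B : int) : Prop :=
  exists a1 a2 a3 a4 a6 : int, global_minimal a1 a2 a3 a4 a6 /\
    A = - 27%:R * wc4 a1 a2 a3 a4 a6 /\ B = - 54%:R * wc6 a1 a2 a3 a4 a6.

Definition on_curve (A B : int) (x y : rat) : Prop :=
  y ^+ 2 = x ^+ 3 + A%:~R * x + B%:~R.

(* x-coordinate of P + Q for affine points P=(x1,y1), Q=(x2,y2) with x1 != x2
   (chord-tangent addition law). *)
Definition add_x (x1 y1 x2 y2 : rat) : rat :=
  let l := (y2 - y1) / (x2 - x1) in l ^+ 2 - x1 - x2.

Definition hrat (R : realType) (q : rat) : R :=
  ln ((Num.max `|numq q| (denq q))%:~R).

From HB Require Import structures.
From mathcomp Require Import all_boot all_order all_algebra.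
From mathcomp Require Import all_classical all_reals all_analysis.
From mathcomp Require Import ring lra.
Import Order.TTheory GRing.Theory Num.Theory.
Set Implicit Arguments. Unset Strict Implicit. Unset Printing Implicit Defensive.
Local Open Scope ring_scope.

(* Clearing denominators in the chord
   formula gives x(P+Q) = N/D with D = s (x2 - x1)^2 and
   N = (x1 x2 + A s^2)(x1 + x2) + 2 B s^3 - 2 m, where m = s^3 y(P) y(Q) is an
   integer since its square is the product of the integers s^3 y^2 = f(x_i),
   f(x) = x^3 + A s^2 x + B s^3.  The hypothesis X^(1/6) <= x(P) gives
   |A| s^2 <= x1^2 and |B| s^3 <= x1^3, so f(x_i) <= 3 x_i^3, |m| <= 3 x1 x2^2,
   |N| <= 12 x1 x2^2 and D <= s x2^2.  As max(x1, s) <= H(P) gcd(x1, s) and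
   x2 <= H(Q) gcd(x2, s), taking logarithms and ln 12 < 2.9 conclude. *)

Definition rat_height (q : rat) : int := Num.max `|numq q| (denq q).

Lemma rat_height_gt0 (q : rat) : 0 < rat_height q.
Proof. by rewrite lt_max denq_gt0 orbT. Qed.

Lemma coprimez_den_num (q : rat) : coprimez (denq q) (numq q).
Proof. by rewrite /coprimez gcdzC; exact: coprime_num_den. Qed.

Lemma rat_frac_scale (q : rat) (n d : int) : 0 < d -> q * d%:~R = n%:~R ->
  exists2 k : int, 0 < k & n = numq q * k /\ d = denq q * k.
Proof.
move=> d_gt0 qdn.
have num_den : numq q * d = n * denq q.
  by apply: (@intr_inj rat); rewrite !intrM numqE -qdn; ring.
have den_dvd : (denq q %| d)%Z.
  have : (denq q %| n * denq q)%Z by rewrite dvdz_mull.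
  by rewrite -num_den Gauss_dvdzr // coprimez_den_num.
have d_eq : d = denq q * (d %/ denq q)%Z by rewrite mulrC divzK.
exists (d %/ denq q)%Z; first by rewrite -(pmulr_rgt0 _ (denq_gt0 q)) -d_eq.
split=> //; apply: (@mulIf _ (denq q)); first exact: denq_neq0.
by rewrite -num_den {1}d_eq; ring.
Qed.

Lemma rat_height_le_frac (q : rat) (n d : int) : 0 < d -> q * d%:~R = n%:~R ->
  rat_height q <= Num.max `|n| d.
Proof.
move=> d_gt0 /(rat_frac_scale d_gt0) [k k_gt0 [-> ->]].
rewrite normrM (gtr0_norm k_gt0) -maxr_pMl; last exact: ltW.
by rewrite -/(rat_height q) ler_peMr // ?ltW ?rat_height_gt0 -?gtz0_ge1.
Qed.

Lemma frac_le_rat_height_gcd (q : rat) (n d : int) : 0 < d -> q * d%:~R = n%:~R ->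
  Num.max `|n| d <= rat_height q * gcdz n d.
Proof.
move=> d_gt0 qdn; have [k k_gt0 [n_eq d_eq]] := rat_frac_scale d_gt0 qdn.
have k_dvd : (k %| gcdz n d)%Z by rewrite dvdz_gcd n_eq d_eq !dvdz_mull.
have k_le : k <= gcdz n d.
  rewrite -(gtz0_abs k_gt0) lez_nat dvdn_leq //.
  by rewrite gcdn_gt0 [(0 < `|d|)%N]absz_gt0 gt_eqF ?orbT.
rewrite {1}n_eq {1}d_eq normrM (gtr0_norm k_gt0) -maxr_pMl; last exact: ltW.
by rewrite -/(rat_height q) ler_wpM2l // ltW ?rat_height_gt0.
Qed.

Lemma rat_sqr_int (q : rat) : q ^+ 2 \is a Num.int -> q \is a Num.int.
Proof.
move=> /numqK; set k := numq _ => q2k.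
have num2 : numq q ^+ 2 = k * denq q ^+ 2.
  by apply: (@intr_inj rat); rewrite !intrM numqE q2k; ring.
have : (denq q %| numq q ^+ 2 * 1)%Z by rewrite mulr1 num2 dvdz_mull // dvdz_exp.
rewrite Gauss_dvdzr ?coprimez_pexpr ?coprimez_den_num //.
rewrite dvdz1 => /eqP den1.
by rewrite Qint_def -absz_denq den1.
Qed.

Section CubicBounds.
Variable R : realDomainType.
Implicit Types a b m kP kQ u x v : R.

Lemma cubic_le_3cube a b u x : 0 <= u <= x -> `|a| <= u ^+ 2 -> `|b| <= u ^+ 3 ->
  x ^+ 3 + a * x + b <= 3%:R * x ^+ 3.
Proof.
move=> /andP[u_ge0 ux]; rewrite !ler_norml => /andP[_ a_le] /andP[_ b_le].
have x_ge0 : 0 <= x := le_trans u_ge0 ux.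
have ax : a * x <= x ^+ 3.
  by rewrite exprSr ler_wpM2r // (le_trans a_le) // lerXn2r.
have u3x3 : u ^+ 3 <= x ^+ 3 by rewrite lerXn2r.
lra.
Qed.

Lemma norm_sqrt_prod_le m kP kQ u v : 0 <= u <= v ->
  0 <= kP <= 3%:R * u ^+ 3 -> 0 <= kQ <= 3%:R * v ^+ 3 -> m ^+ 2 = kP * kQ ->
  `|m| <= 3%:R * u * v ^+ 2.
Proof.
move=> /andP[u_ge0 uv] /andP[kP_ge0 kP_le] /andP[kQ_ge0 kQ_le] m2.
have v_ge0 : 0 <= v := le_trans u_ge0 uv.
have uv_ge0 : 0 <= 3%:R * u * v ^+ 2 by rewrite !mulr_ge0 ?exprn_ge0.
rewrite -(@ler_pXn2r _ 2) ?nnegrE // -normrX ger0_norm ?sqr_ge0 // m2.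
have u3v3 : u ^+ 3 * v ^+ 3 <= u ^+ 2 * v ^+ 4.
  have -> : u ^+ 3 * v ^+ 3 = u ^+ 2 * v ^+ 3 * u by ring.
  have -> : u ^+ 2 * v ^+ 4 = u ^+ 2 * v ^+ 3 * v by ring.
  by rewrite ler_wpM2l // mulr_ge0 ?exprn_ge0.
apply: (le_trans (ler_pM kP_ge0 kQ_ge0 kP_le kQ_le)).
have -> : (3%:R * u * v ^+ 2) ^+ 2 = 9%:R * (u ^+ 2 * v ^+ 4) by ring.
have -> : 3%:R * u ^+ 3 * (3%:R * v ^+ 3) = 9%:R * (u ^+ 3 * v ^+ 3) by ring.
by rewrite ler_wpM2l.
Qed.

Lemma add_x_num_le a b m u v : 0 <= u <= v -> `|a| <= u ^+ 2 -> `|b| <= u ^+ 3 ->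
  `|m| <= 3%:R * u * v ^+ 2 ->
  `|(u * v + a) * (u + v) + 2%:R * b - 2%:R * m| <= 12%:R * u * v ^+ 2.
Proof.
move=> /andP[u_ge0 uv]; rewrite !ler_norml => /andP[a_lo a_hi] /andP[b_lo b_hi] /andP[m_lo m_hi].
have v_ge0 : 0 <= v := le_trans u_ge0 uv.
have uu_uv : u ^+ 2 <= u * v by rewrite expr2 ler_wpM2l.
have u3 : u ^+ 3 <= u * v ^+ 2 by rewrite [u ^+ 3]exprS ler_wpM2l // lerXn2r.
nra.
Qed.

End CubicBounds.

Section ScaledCoordinates.
Variables (A B : int) (s : rat).
Hypothesis s_neq0 : s != 0.

Lemma on_curve_scaled x y : on_curve A B (x / s) y ->
  s ^+ 3 * y ^+ 2 = x ^+ 3 + A%:~R * s ^+ 2 * x + B%:~R * s ^+ 3.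
Proof. by rewrite /on_curve => ->; field. Qed.

Lemma add_x_scaled x1 y1 x2 y2 : x1 != x2 ->
  on_curve A B (x1 / s) y1 -> on_curve A B (x2 / s) y2 ->
  add_x (x1 / s) y1 (x2 / s) y2 * (s * (x2 - x1) ^+ 2) =
  (x1 * x2 + A%:~R * s ^+ 2) * (x1 + x2) + 2%:R * (B%:~R * s ^+ 3)
    - 2%:R * (s ^+ 3 * y1 * y2).
Proof.
move=> x12 on1 on2; have x21 : x2 - x1 != 0 by rewrite subr_eq0 eq_sym.
have -> : add_x (x1 / s) y1 (x2 / s) y2 =
    (y2 ^+ 2 + y1 ^+ 2 - 2%:R * y1 * y2) * s ^+ 2 / (x2 - x1) ^+ 2 - x1 / s - x2 / s.
  by rewrite /add_x; field; rewrite s_neq0 x21.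
by rewrite on1 on2; field; rewrite s_neq0 x21.
Qed.

End ScaledCoordinates.

Section IntegralScaling.
Variables (A B s : int).
Hypothesis s_gt0 : 0 < s.

Let a := A * s ^+ 2.
Let b := B * s ^+ 3.
Let f (x : int) := x ^+ 3 + a * x + b.

Let s_neq0 : (s%:~R : rat) != 0. Proof. by rewrite intr_eq0 gt_eqF. Qed.

Lemma on_curve_scaled_int x y : on_curve A B (x%:~R / s%:~R) y ->
  (s%:~R : rat) ^+ 3 * y ^+ 2 = (f x)%:~R.
Proof. by move=> /(on_curve_scaled s_neq0) ->; rewrite /f /a /b !(intrD, intrM, rmorphXn). Qed.

Lemma scaled_cubic_ge0 x y : on_curve A B (x%:~R / s%:~R) y -> 0 <= f x.
Proof.
move=> /on_curve_scaled_int fx; rewrite -(ler0z rat) -fx.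
by rewrite mulr_ge0 ?sqr_ge0 // exprn_ge0 // ler0z ltW.
Qed.

Variables (x1 x2 : int) (y1 y2 : rat).
Hypotheses (on1 : on_curve A B (x1%:~R / s%:~R) y1)
           (on2 : on_curve A B (x2%:~R / s%:~R) y2).

Let m := numq ((s%:~R : rat) ^+ 3 * y1 * y2).

Lemma scaled_y_prod_int : (m%:~R : rat) = s%:~R ^+ 3 * y1 * y2.
Proof.
apply/numqK/rat_sqr_int.
have -> : ((s%:~R : rat) ^+ 3 * y1 * y2) ^+ 2 = (s%:~R ^+ 3 * y1 ^+ 2) * (s%:~R ^+ 3 * y2 ^+ 2).
  by ring.
by rewrite (on_curve_scaled_int on1) (on_curve_scaled_int on2) -intrM intr_int.
Qed.

Lemma scaled_y_prod_sqr : m ^+ 2 = f x1 * f x2.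
Proof.
apply: (@intr_inj rat); rewrite [RHS]intrM [LHS]intrM scaled_y_prod_int.
by rewrite -(on_curve_scaled_int on1) -(on_curve_scaled_int on2); ring.
Qed.

Lemma add_x_scaled_int : x1 != x2 ->
  add_x (x1%:~R / s%:~R) y1 (x2%:~R / s%:~R) y2 * (s * (x2 - x1) ^+ 2)%:~R =
  ((x1 * x2 + a) * (x1 + x2) + 2%:R * b - 2%:R * m)%:~R.
Proof.
move=> x12; rewrite intrM rmorphXn rmorphB /= (add_x_scaled s_neq0 _ on1 on2) ?eqr_int //.
by rewrite /a /b !(intrD, intrN, intrM) scaled_y_prod_int; ring.
Qed.

Lemma add_x_height_le : 0 <= x1 < x2 ->
  `|A| * s ^+ 2 <= x1 ^+ 2 -> `|B| * s ^+ 3 <= x1 ^+ 3 ->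
  rat_height (add_x (x1%:~R / s%:~R) y1 (x2%:~R / s%:~R) y2)
    <= 12%:R * Num.max x1 s * x2 ^+ 2.
Proof.
move=> /andP[x1_ge0 x12] hA hB; have x1_le_x2 : 0 <= x1 <= x2 by rewrite x1_ge0 ltW.
have ha : `|a| <= x1 ^+ 2 by rewrite /a normrM normrX (gtr0_norm s_gt0).
have hb : `|b| <= x1 ^+ 3 by rewrite /b normrM normrX (gtr0_norm s_gt0).
have f1 : 0 <= f x1 <= 3%:R * x1 ^+ 3.
  by rewrite (scaled_cubic_ge0 on1) (cubic_le_3cube _ ha hb) // x1_ge0 /=.
have f2 : 0 <= f x2 <= 3%:R * x2 ^+ 3.
  by rewrite (scaled_cubic_ge0 on2) (cubic_le_3cube x1_le_x2 ha hb).
have N_le := add_x_num_le x1_le_x2 ha hb (norm_sqrt_prod_le x1_le_x2 f1 f2 scaled_y_prod_sqr).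
have D_gt0 : 0 < s * (x2 - x1) ^+ 2 by rewrite mulr_gt0 // exprn_gt0 // subr_gt0.
apply: le_trans (rat_height_le_frac D_gt0 (add_x_scaled_int (negbT (lt_eqF x12)))) _.
have x1_le : x1 <= Num.max x1 s by rewrite le_max lexx.
have s_le : s <= Num.max x1 s by rewrite le_max lexx orbT.
have x2sq_ge0 : 0 <= x2 ^+ 2 := sqr_ge0 x2.
rewrite ge_max; apply/andP; split.
  by apply: le_trans N_le _; rewrite ler_wpM2r // ler_wpM2l.
have D_le : (x2 - x1) ^+ 2 <= x2 ^+ 2 by nra.
apply: le_trans (_ : Num.max x1 s * x2 ^+ 2 <= _).
  by apply: ler_pM; rewrite ?sqr_ge0 ?(ltW s_gt0).
by rewrite ler_wpM2r // ler_peMl // (le_trans (ltW s_gt0)).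
Qed.

Lemma add_x_height_le_gcd : 0 <= x1 < x2 ->
  `|A| * s ^+ 2 <= x1 ^+ 2 -> `|B| * s ^+ 3 <= x1 ^+ 3 ->
  rat_height (add_x (x1%:~R / s%:~R) y1 (x2%:~R / s%:~R) y2)
    <= 12%:R * (rat_height (x1%:~R / s%:~R) * gcdz x1 s)
             * (rat_height (x2%:~R / s%:~R) * gcdz x2 s) ^+ 2.
Proof.
move=> x12 hA hB; apply: le_trans (add_x_height_le x12 hA hB) _.
have /andP[x1_ge0 x1_lt_x2] := x12; have x2_ge0 := le_trans x1_ge0 (ltW x1_lt_x2).
have xsK (x : int) : (x%:~R / s%:~R : rat) * s%:~R = x%:~R by rewrite divfK.
have := frac_le_rat_height_gcd s_gt0 (xsK x1); rewrite (ger0_norm x1_ge0) => hP.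
have x2_le : x2 <= rat_height (x2%:~R / s%:~R) * gcdz x2 s.
  by apply: le_trans (frac_le_rat_height_gcd s_gt0 (xsK x2)); rewrite le_max ler_norm.
apply: ler_pM; rewrite ?sqr_ge0 ?mulr_ge0 ?le_max ?x1_ge0 ?ler_wpM2l //.
by rewrite lerXn2r // nnegrE (le_trans x2_ge0).
Qed.

End IntegralScaling.

Lemma short_coeffs_le (R : realDomainType) (A B s x : R) : 0 <= s -> 0 <= x ->
  Num.max (`|A| ^+ 3) (`|B| ^+ 2) * s ^+ 6 <= x ^+ 6 ->
  `|A| * s ^+ 2 <= x ^+ 2 /\ `|B| * s ^+ 3 <= x ^+ 3.
Proof.
move=> s_ge0 x_ge0 X_le; split.
- rewrite -(@ler_pXn2r _ 3) ?nnegrE ?mulr_ge0 ?exprn_ge0 // exprMn -!exprM.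
  by apply: le_trans X_le; rewrite ler_wpM2r ?exprn_ge0 // le_max lexx.
- rewrite -(@ler_pXn2r _ 2) ?nnegrE ?mulr_ge0 ?exprn_ge0 // exprMn -!exprM.
  by apply: le_trans X_le; rewrite ler_wpM2r ?exprn_ge0 // le_max lexx orbT.
Qed.

Lemma ler_powR_invn (R : realType) (n : nat) (a r : R) : (0 < n)%N -> 0 <= a ->
  a `^ n%:R^-1 <= r -> a <= r ^+ n.
Proof.
move=> n_gt0 a_ge0 ar.
have -> : a = (a `^ n%:R^-1) ^+ n.
  by rewrite -powR_mulrn ?powR_ge0 // -powRrM mulVf ?powRr1 // pnatr_eq0 -lt0n.
by rewrite lerXn2r // nnegrE ?powR_ge0 // (le_trans _ ar) ?powR_ge0.
Qed.

Lemma ln12_le (R : realType) : ln (12%:R : R) <= 29%:R / 10%:R.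
Proof.
have e12 : (12%:R : R) <= expR (29%:R / 10%:R).
  rewrite [_ / _]mulrC expRM_natr.
  apply: le_trans (_ : (1 + 10%:R^-1) ^+ 29 <= _); first by lra.
  by rewrite lerXn2r ?nnegrE ?expR_ge0 ?expR_ge1Dx //; lra.
by rewrite -(expRK (29%:R / 10%:R)) ler_ln ?posrE ?expR_gt0.
Qed.

Lemma ln_le_powR (R : realType) (a b d : R) : 0 < a -> 0 < b -> a <= b `^ d ->
  ln a <= d * ln b.
Proof. by move=> a_gt0 b_gt0 ab; rewrite -ln_powR ler_ln ?posrE ?powR_gt0. Qed.

Lemma hrat_le_mul_sqr (R : realType) (q p r : rat) (c g1 g2 : int) :
  0 < c -> 0 < g1 -> 0 < g2 ->
  rat_height q <= c * (rat_height p * g1) * (rat_height r * g2) ^+ 2 ->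
  hrat R q <= ln c%:~R + hrat R p + ln g1%:~R + 2%:R * (hrat R r + ln g2%:~R).
Proof.
move=> c_gt0 g1_gt0 g2_gt0 hq.
have bound_gt0 : 0 < c * (rat_height p * g1) * (rat_height r * g2) ^+ 2.
  by rewrite !mulr_gt0 ?exprn_gt0 ?mulr_gt0 ?rat_height_gt0.
apply: (@le_trans _ _ (ln (c * (rat_height p * g1) * (rat_height r * g2) ^+ 2)%:~R)).
  by rewrite ler_ln ?posrE ?ltr0z ?ler_int ?rat_height_gt0.
have pos (x : int) : 0 < x -> (0 : R) < x%:~R by rewrite ltr0z.
have lnM_pos (x y : R) : 0 < x -> 0 < y -> ln (x * y) = ln x + ln y.
  by move=> x_gt0 y_gt0; rewrite lnM.
rewrite intrM rmorphXn /= !intrM lnM_pos ?mulr_gt0 ?exprn_gt0 ?pos ?rat_height_gt0 //.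
rewrite lnXn ?mulr_gt0 ?pos ?rat_height_gt0 // !lnM_pos ?mulr_gt0 ?pos ?rat_height_gt0 //.
rewrite /hrat -/(rat_height p) -/(rat_height r); lra.
Qed.

Lemma coeffs_le_of_root6_le (R : realType) (A B x s : int) : 0 < s ->
  ((Num.max (`|A| ^+ 3) (`|B| ^+ 2))%:~R : R) `^ (6%:R)^-1 <= ratr (x%:~R / s%:~R) ->
  [/\ 0 <= x, `|A| * s ^+ 2 <= x ^+ 2 & `|B| * s ^+ 3 <= x ^+ 3].
Proof.
set X := Num.max _ _ => s_gt0 hX.
have s_gt0' : (0 : rat) < s%:~R by rewrite ltr0z.
have x_ge0 : 0 <= x.
  have sV_gt0 : (0 : rat) < (s%:~R)^-1 by rewrite invr_gt0.
  rewrite -(ler0z rat) -(pmulr_lge0 _ sV_gt0) -(ler_rat R) rmorph0.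
  by apply: le_trans hX; rewrite powR_ge0.
have X_le : X * s ^+ 6 <= x ^+ 6.
  have X_ge0 : (0 : R) <= X%:~R by rewrite ler0z le_max exprn_ge0.
  move: (ler_powR_invn (isT : (0 < 6)%N) X_ge0 hX).
  rewrite -(ratr_int R) -rmorphXn ler_rat -(ler_int rat) intrM !rmorphXn /=.
  by rewrite expr_div_n ler_pdivlMr // exprn_gt0.
by have [hA hB] := short_coeffs_le (ltW s_gt0) x_ge0 X_le.
Qed.

Theorem lemma3p2 (R : realType) (A B : int) (delta : R)
  (xP yP xQ yQ : rat) (x1 x2 : int) (s : nat) :
  short_model_of_minimal A B ->
  0 <= delta -> delta <= 1 ->
  on_curve A B xP yP -> on_curve A B xQ yQ ->
  ((Num.max (`|A| ^+ 3) (`|B| ^+ 2))%:~R : R) `^ (6%:R)^-1 <= ratr xP ->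
  xP < xQ ->
  (0 < s)%N ->
  xP = x1%:~R / s%:R -> xQ = x2%:~R / s%:R ->
  ((gcdz x1 s)%:~R : R) <= (s%:R : R) `^ delta ->
  ((gcdz x2 s)%:~R : R) <= (s%:R : R) `^ delta ->
  hrat R (add_x xP yP xQ yQ)
    <= hrat R xP + 2%:R * hrat R xQ + 3%:R * delta * ln (s%:R : R)
       + 29%:R / 10%:R.
Proof.
move=> _ _ _ onP onQ hX xPQ s_gt0 xPE xQE g1_le g2_le.
have sE : (s%:R : rat) = (s%:Z)%:~R by [].
rewrite {}sE in xPE xQE; subst xP xQ.
have s_gt0' : (0 : int) < s by rewrite ltz_nat.
have [x1_ge0 hA hB] := coeffs_le_of_root6_le s_gt0' hX.
have x12 : 0 <= x1 < x2 by move: xPQ; rewrite x1_ge0 ltr_pM2r ?invr_gt0 ?ltr0z // ltr_int.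
have hq := add_x_height_le_gcd s_gt0' onP onQ x12 hA hB.
have G_gt0 (x : int) : 0 < gcdz x s by rewrite lt_def gcdz_eq0 (gt_eqF s_gt0') andbF.
apply: le_trans (hrat_le_mul_sqr R (ltr0Sn _ 11) (G_gt0 x1) (G_gt0 x2) hq) _.
have l12 : ln (12%:~R : R) <= 29%:R / 10%:R := ln12_le R.
have s_gt0R : (0 : R) < s%:R by rewrite ltr0n.
have G_gt0R (x : int) : (0 : R) < (gcdz x s)%:~R by rewrite ltr0z.
have := ln_le_powR (G_gt0R x1) s_gt0R g1_le; have := ln_le_powR (G_gt0R x2) s_gt0R g2_le.
lra.
Qed.
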